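(* Let $A$ be an arbitrary modal algebra and let $S$ be a countable subset of $\mathcal{P}(A)$. Then the map $f:A\to K(\bar J_S(A))$ given by $f(x)=\{F\in Q_S(A)\mid x\in F\}$ is an injective homomorphism of modal algebras, and for every $X\in S$ such that $\bigwedge X$ exists in $A$, $f(\bigwedge X)=\bigcap_{x\in X}f(x)$.
   Context: A modal algebra is a structure $\langle A;\lor,\land,-,\Box,0,1\rangle$ whose reduct is a Boolean algebra and $\Box$ is an arbitrary unary operation. A homomorphism of modal algebras is a Boolean homomorphism commuting with $\Box$. A prime filter is a proper filter $F$ with $x\lor y\in F\Rightarrow x\in F$ or $y\in F$. For $S\subseteq\mathcal{P}(A)$, a Q-filter for $S$ is a prime filter $F$ such that for every $X\in S$, if $\bigwedge X$ exists in $A$ and $X\subseteq F$ then $\bigwedge X\in F$; $Q_S(A)$ is the set of these. For a neighborhood frame $Z=\langle C,\mathcal{V}\rangle$ ($C\neq\emptyset$, $\mathcal{V}:C\to\mathcal{P}(\mathcal{P}(C))$), $K(Z)=\langle\mathcal{P}(C);\cup,\cap,C\setminus-,\Box_Z,\emptyset,C\rangle$ with $\Box_Z X=\{c\mid X\in\mathcal{V}(c)\}$. $\bar J_S(A)=\langle Q_S(A),\bar{\mathcal{V}}_A\rangle$ with $\bar{\mathcal{V}}_A(F)=\{\{G\in Q_S(A)\mid x\in G\}\mid x\in A,\ \Box x\in F\}$. *)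

From HB Require Import structures.
From mathcomp Require Import all_boot all_order.
From mathcomp Require Import boolp classical_sets cardinality.
Import Order.TTheory.

Set Implicit Arguments.
Unset Strict Implicit.
Unset Printing Implicit Defensive.

Local Open Scope classical_set_scope.
Local Open Scope order_scope.

Section ModalDefs.
Context {d : Order.disp_t} {A : ctbDistrLatticeType d}.

Definition is_meet (X : set A) (m : A) : Prop :=
  (forall x, X x -> m <= x) /\ (forall l, (forall x, X x -> l <= x) -> l <= m).

Definition proper_filter (F : set A) : Prop :=
  [/\ F \top, ~ F \bot,
      (forall x y, F x -> x <= y -> F y) &
      (forall x y, F x -> F y -> F (Order.meet x y))].

Definition prime_filter (F : set A) : Prop :=
  proper_filter F /\ (forall x y, F (Order.join x y) -> F x \/ F y).

Definition Qfilter (S : set (set A)) (F : set A) : Prop :=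
  prime_filter F /\
  (forall X, S X -> forall m, is_meet X m -> X `<=` F -> F m).

Definition Qpt (S : set (set A)) := {F : set A | Qfilter S F}.

Definition JbarV (S : set (set A)) (box : A -> A) : Qpt S -> set (set (Qpt S)) :=
  fun F Y => exists x, proj1_sig F (box x) /\ Y = (fun G : Qpt S => proj1_sig G x).

Definition Qrep (S : set (set A)) (x : A) : set (Qpt S) :=
  fun G => proj1_sig G x.

End ModalDefs.
Arguments JbarV {d A} S box _ _.
Arguments Qrep {d A} S x _.
Arguments Qfilter {d A} S F.
Arguments Qpt {d A} S.

(* \Box_Z of the complex algebra K(Z) of a neighbourhood frame Z = <W, V> *)
Definition Kbox (W : Type) (V : W -> set (set W)) (X : set W) : set W :=
  fun c => V c X.

Definition K_modal_hom {d : Order.disp_t} {A : ctbDistrLatticeType d}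
  (box : A -> A) (W : Type) (V : W -> set (set W)) (h : A -> set W) : Prop :=
  (forall x y, h (Order.join x y) = h x `|` h y) /\
  (forall x y, h (Order.meet x y) = h x `&` h y) /\
  (forall x, h (Order.compl x) = ~` h x) /\
  h \bot = set0 /\ h \top = setT /\
  (forall x, h (box x) = Kbox V (h x)).

From HB Require Import structures.
From mathcomp Require Import all_boot all_order.
From mathcomp Require Import boolp classical_sets cardinality.
Import Order.Theory.

Set Implicit Arguments.
Unset Strict Implicit.
Unset Printing Implicit Defensive.
Local Open Scope order_scope.
Local Open Scope classical_set_scope.

(* Points of Q_S(A) are prime filters of the Boolean reduct, i.e. ultrafilters, so
   the map Qrep x = {F | x \in F} preserves joins, meets, complements, bottom and
   top; by the very definition of a Q-filter it also sends the meet of each X in S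
   to the intersection of the images of its elements.

   The substance is injectivity, which needs enough Q-filters.  A Rasiowa-Sikorski
   argument provides them: enumerating the countable S, a nonzero element is shrunk
   step by step to decide each meet of S in turn, and the filter generated by the
   resulting chain is extended to a prime filter (prime filter theorem, via Zorn).
   Injectivity then makes the witness in \bar V_A unique, so Qrep commutes with box. *)

Section PrimeFilters.
Context {d : Order.disp_t} {A : ctbDistrLatticeType d}.
Implicit Types (F G : set A) (x y z : A).

Lemma meetC_eq0 x y : (Order.meet x (Order.compl y) == \bot) = (x <= y).
Proof. by rewrite disj_leC complK. Qed.

Lemma proper_filter_compl F x :
  proper_filter F -> F x -> ~ F (Order.compl x).
Proof.
by case=> _ Fbot _ Fmeet Fx Fcx; apply: Fbot; rewrite -(meetxC x); apply: Fmeet.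
Qed.

Lemma prime_filter_compl F x : prime_filter F -> F x \/ F (Order.compl x).
Proof. by case=> -[Ftop _ _ _] Fpr; apply: Fpr; rewrite joinxC. Qed.

Lemma ultra_prime F :
  proper_filter F -> (forall x, F x \/ F (Order.compl x)) -> prime_filter F.
Proof.
move=> PF Fu; split=> // x y Fxy; have [_ _ Fup Fmeet] := PF.
case: (Fu x) => [|Fcx]; [by left | right].
by apply: (Fup _ _ (Fmeet _ _ Fcx Fxy)); rewrite meetUr meetCx join0x leIr.
Qed.

Definition adjoin F x : set A := fun z => exists2 f, F f & Order.meet f x <= z.

Lemma adjoin_proper F x :
  proper_filter F -> ~ F (Order.compl x) -> proper_filter (adjoin F x).
Proof.
move=> [Ftop Fbot Fup Fmeet] Fcx; split.
- by exists \top; rewrite ?lex1.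
- move=> [f Ff]; rewrite lex0 => /eqP fx0; apply: Fcx; apply: (Fup f) => //.
  by rewrite -disj_leC fx0.
- by move=> u v [f Ff fu] uv; exists f; rewrite ?(le_trans fu).
- move=> u v [f Ff fu] [g Fg gv]; exists (Order.meet f g); first exact: Fmeet.
  rewrite lexI (le_trans _ fu) ?(le_trans _ gv) //; apply: leI2 => //.
  + exact: leIr.
  + exact: leIl.
Qed.

Lemma maximal_ultra F :
  proper_filter F ->
  (forall F', proper_filter F' -> F `<=` F' -> F' `<=` F) ->
  forall x, F x \/ F (Order.compl x).
Proof.
move=> PF Fmax x; case: (pselect (F (Order.compl x))) => Fcx; [by right | left].
have FFx : F `<=` adjoin F x by move=> f Ff; exists f => //; exact: leIl.
by apply: (Fmax _ (adjoin_proper PF Fcx) FFx); exists \top; [case: PF | exact: leIr].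
Qed.

Lemma chain_union_proper G (C : set (set A)) :
  proper_filter G -> (forall H, C H -> proper_filter (G `|` H)) ->
  total_on C subset -> proper_filter (G `|` \bigcup_(H in C) H).
Proof.
move=> [Gtop Gbot Gup Gmeet] CP Ctot.
have inU H : C H -> G `|` H `<=` G `|` \bigcup_(X in C) X.
  by move=> CH x [Gx|Hx]; [left | right; exists H].
split; first by left.
- by case=> [//|[H CH Hb]]; have [_ + _ _] := CP H CH; apply; right.
- move=> x y [Gx|[H CH Hx]] xy; first by left; exact: Gup xy.
  by have [_ _ Hup _] := CP H CH; apply: (inU H CH); apply: (Hup x) => //; right.
- move=> x y [Gx|[H CH Hx]] [Gy|[H' CH' Hy]]; first by left; apply: Gmeet.
  + by have [_ _ _ Hm] := CP H' CH'; apply: (inU H' CH'); apply: Hm; [left|right].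
  + by have [_ _ _ Hm] := CP H CH; apply: (inU H CH); apply: Hm; [right|left].
  + have [HH'|H'H] := Ctot H H' CH CH'.
      have [_ _ _ Hm] := CP H' CH'; apply: (inU H' CH').
      by apply: Hm; right => //; apply: HH'.
    have [_ _ _ Hm] := CP H CH; apply: (inU H CH).
    by apply: Hm; right => //; apply: H'H.
Qed.

(* Zorn's lemma gives H maximal with G `|` H a proper filter; this filter is then
   maximal among all proper filters, hence an ultrafilter, hence prime. *)
Lemma prime_filter_ext G :
  proper_filter G -> exists2 F, prime_filter F & G `<=` F.
Proof.
move=> PG; pose P H := proper_filter (G `|` H).
have [H [PH Hmax]] : exists H, P H /\ forall B, H `<` B -> ~ P B.
  by apply: Zorn_bigcup => C CP; apply: chain_union_proper.
exists (G `|` H); last by move=> x Gx; left.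
apply: ultra_prime => //; apply: maximal_ultra => // F' PF' GHF' x F'x; right.
have PF'' : P F'.
  rewrite /P (_ : G `|` F' = F') //; apply/seteqP.
  by split=> [y [Gy|] | y]; [apply: GHF'; left | | right].
case: (pselect (F' `<=` H)) => [/(_ x F'x) // | nsub].
by exfalso; apply: (Hmax F') => //; split=> // y Hy; apply: GHF'; right.
Qed.

End PrimeFilters.

Section Separation.
Context {d : Order.disp_t} {A : ctbDistrLatticeType d}.
Implicit Types (X : set A) (x b c m : A).

Lemma meet_witness X m b :
  is_meet X m -> ~ b <= m -> exists2 x, X x & Order.meet b (Order.compl x) != \bot.
Proof.
move=> [_ mglb]; apply: contra_notP => nowit; apply: mglb => x Xx.
by rewrite -meetC_eq0; apply/negP => /negP bx; apply: nowit; exists x.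
Qed.

(* c decides X if every filter containing c and all of X contains the meet of X:
   c lies below the meet, or below the complement of some element of X. *)
Definition decides X c : Prop :=
  forall m, is_meet X m -> c <= m \/ exists2 x, X x & c <= Order.compl x.

Lemma refine_decides X b :
  exists c, [/\ c <= b, b != \bot -> c != \bot & decides X c].
Proof.
case: (pselect (exists m, is_meet X m /\ ~ b <= m)) => [[m [Xm nbm]] | allbelow].
  have [x Xx bx] := meet_witness Xm nbm.
  exists (Order.meet b (Order.compl x)); split=> // [|m' _]; first exact: leIl.
  by right; exists x => //; exact: leIr.
exists b; split=> // m Xm; left.
by apply: contra_notP allbelow => nbm; exists m.
Qed.

Lemma chain_filter (s : nat -> A) :
  (forall n, s n.+1 <= s n) -> (forall n, s n != \bot) ->
  proper_filter (fun z => exists n, s n <= z).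
Proof.
move=> sdec snz.
have smono : {homo s : i j / (i <= j)%N >-> j <= i}.
  by apply: homo_leq => [x|y x z xy yz|n] //; exact: le_trans yz xy.
split.
- by exists 0%N; exact: lex1.
- by move=> [n]; rewrite lex0; apply/negP.
- by move=> x y [n sx] xy; exists n; exact: le_trans xy.
- move=> x y [n sx] [k sy]; exists (maxn n k); rewrite lexI.
  by rewrite (le_trans _ sx) ?(le_trans _ sy) ?smono ?leq_maxl ?leq_maxr.
Qed.

(* Enumerating S as e 0, e 1, ..., we shrink a step by step so
   that the n-th step decides e n, and extend the resulting filter to a prime one. *)
Lemma separation (S : set (set A)) a :
  countable S -> a != \bot -> exists2 F, Qfilter S F & F a.
Proof.
move=> /pcard_surjP [e Se] a0.
pose refine X b := projT1 (cid (refine_decides X b)).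
have refineP X b := projT2 (cid (refine_decides X b)).
pose fix s n := if n is k.+1 then refine (e k) (s k) else a.
have snz n : s n != \bot.
  by elim: n => [//|n IH] /=; have [_ /(_ IH)] := refineP (e n) (s n).
have sdec n : s n.+1 <= s n by have [] := refineP (e n) (s n).
have sdecides n : decides (e n) (s n.+1) by have [] := refineP (e n) (s n).
have [F PF sF] := prime_filter_ext (chain_filter sdec snz).
exists F; last by apply: sF; exists 0%N.
split=> // X SX m Xm XF; have [n _ enX] := Se X SX; rewrite -enX in Xm XF.
have [sm | [x Xx sx]] := sdecides n m Xm; first by apply: sF; exists n.+1.
have Fcx : F (Order.compl x) by apply: sF; exists n.+1.
by exfalso; apply: proper_filter_compl (XF x Xx) Fcx; case: PF.
Qed.

End Separation.

Section Representation.
Context {d : Order.disp_t} {A : ctbDistrLatticeType d} (S : set (set A)).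
Implicit Types (G : Qpt S) (x y : A).

Lemma Qpt_prime G : prime_filter (proj1_sig G).
Proof. by case: G => F []. Qed.

Lemma Qpt_proper G : proper_filter (proj1_sig G).
Proof. by case: (Qpt_prime G). Qed.

(* The Boolean operations are preserved by Qrep, since points are ultrafilters. *)
Lemma Qrep_join x y : Qrep S (Order.join x y) = Qrep S x `|` Qrep S y.
Proof.
apply/seteqP; split=> G; first by case: (Qpt_prime G) => _; apply.
have [_ _ Fup _] := Qpt_proper G.
by case=> [Gx|Gy]; [apply: Fup Gx _; exact: leUl | apply: Fup Gy _; exact: leUr].
Qed.

Lemma Qrep_meet x y : Qrep S (Order.meet x y) = Qrep S x `&` Qrep S y.
Proof.
apply/seteqP; split=> G; have [_ _ Fup Fmeet] := Qpt_proper G.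
  by move=> Gxy; split; apply: Fup Gxy _; [exact: leIl | exact: leIr].
by case; apply: Fmeet.
Qed.

Lemma Qrep_compl x : Qrep S (Order.compl x) = ~` Qrep S x.
Proof.
apply/seteqP; split=> G.
  by move=> Gcx Gx; apply: proper_filter_compl Gx Gcx; exact: Qpt_proper.
by case: (prime_filter_compl x (Qpt_prime G)).
Qed.

Lemma Qrep_bot : Qrep S \bot = set0.
Proof. by apply/seteqP; split=> G //; case: (Qpt_proper G). Qed.

Lemma Qrep_top : Qrep S \top = setT.
Proof. by apply/seteqP; split=> G //; case: (Qpt_proper G). Qed.

Lemma Qrep_bigmeet X :
  S X -> forall m, is_meet X m -> Qrep S m = \bigcap_(x in X) Qrep S x.
Proof.
move=> SX m Xm; apply/seteqP; split=> G; have [_ GQ] := proj2_sig G.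
  have [_ _ Gup _] := Qpt_proper G.
  by move=> Gm x Xx; apply: Gup Gm _; case: Xm => + _; apply.
by move=> GX; apply: GQ SX m Xm _ => x Xx; exact: GX.
Qed.

Hypothesis countS : countable S.

(* Qrep reflects the order: if x is not below y, a Q-filter separates them. *)
Lemma Qrep_le x y : Qrep S x `<=` Qrep S y -> x <= y.
Proof.
move=> xy; apply/negPn/negP => nxy.
have [F QF Fxy] : exists2 F, Qfilter S F & F (Order.meet x (Order.compl y)).
  by apply: separation; rewrite ?meetC_eq0.
pose G : Qpt S := exist _ F QF.
have [_ _ Fup _] := Qpt_proper G.
have Gy : Qrep S y G by apply: xy; apply: Fup Fxy _; exact: leIl.
have Gcy : Qrep S (Order.compl y) G by apply: Fup Fxy _; exact: leIr.
exact: proper_filter_compl (Qpt_proper G) Gy Gcy.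
Qed.

Lemma Qrep_inj : injective (Qrep S).
Proof. by move=> x y xy; apply: le_anti; rewrite !Qrep_le // xy. Qed.

(* The box of K(\bar J_S(A)) matches box on A; injectivity makes the
   witness in the definition of \bar V_A unique. *)
Lemma Qrep_box (box : A -> A) x : Qrep S (box x) = Kbox (JbarV S box) (Qrep S x).
Proof.
apply/seteqP; split=> G; first by exists x.
by case=> y [Gy /Qrep_inj ->].
Qed.

End Representation.

Theorem mainTheorem7 (d : Order.disp_t) (A : ctbDistrLatticeType d)
  (box : A -> A) (S : set (set A)) :
  countable S ->
  K_modal_hom box (JbarV S box) (Qrep S) /\ injective (Qrep S) /\
  (forall X, S X -> forall m, is_meet X m ->
     Qrep S m = \bigcap_(x in X) Qrep S x).
Proof.
move=> countS; split; last by split; [exact: Qrep_inj | exact: Qrep_bigmeet].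
split; first exact: Qrep_join.
split; first exact: Qrep_meet.
split; first exact: Qrep_compl.
split; first exact: Qrep_bot.
split; first exact: Qrep_top.
exact: Qrep_box.
Qed.
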